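(* Let $\mathbf X=\{X_n\}$, $\mathbf Z=\{Z_n\}$ be general sources with given couplings $P_{Z_n|X_n}$, and let $\mathbf W=\{W_{Y_n|X_n}\}$ be a general channel. If $\mathbf Z$ is an approximating source for $\mathbf W$ given $\mathbf X$, then for every $\epsilon\in(0,1)$ and every $\gamma>0$, $$\lim_{n\to\infty}\mathbb E_{P_{X_n}}\Big[\mu\big(\{\delta\in[0,1-\epsilon): c_n^{z|x}(\delta+\epsilon,X_n)-c_n^{w}(\delta,X_n)<-\gamma\}\big)\Big]=0 .$$
   Context: Logarithms are natural. For each $n$, $X_n$ and $Z_n$ are jointly distributed random variables on countable sets $\mathcal X_n$, $\mathcal Z_n$, with joint law determined by the pmf $P_{X_n}$ and a conditional pmf $P_{Z_n|X_n}$. The channel $W_{Y_n|X_n}(\cdot|x)$ is a pmf on a countable set $\mathcal Y_n$ for each $x\in\mathcal X_n$. For a random variable $Z$ on a countable set $\mathcal Z$ with pmf $P_Z$, list the elements of positive probability as $z_1,z_2,\dots$ (a finite or countably infinite list) with $P_Z(z_1)\ge P_Z(z_2)\ge\cdots$ (ties broken arbitrarily). Set $\delta_0=0$ and $\delta_k=\sum_{i\le k}P_Z(z_i)$. For $\delta\in[0,1)$ define $c^z(\delta)=\log\frac{1}{P_Z(z_k)}$, where $k$ is the unique index with $\delta\in[\delta_{k-1},\delta_k)$. For $x\in\mathcal X_n$, $c_n^{z|x}(\cdot,x)$ is this function for the pmf $P_{Z_n|X_n}(\cdot|x)$, and $c_n^{w}(\cdot,x)$ is this function for the pmf $W_{Y_n|X_n}(\cdot|x)$.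 $\mu$ is Lebesgue measure. The variational distance is $d(P,Q)=\sum_a|P(a)-Q(a)|$. $\mathbf Z$ is an approximating source for $\mathbf W$ given $\mathbf X$ if there exist deterministic maps $\varphi_n:\mathcal X_n\times\mathcal Z_n\to\mathcal Y_n$ such that $$\lim_{n\to\infty}d\big(P_{X_nY_n},P_{X_n,\varphi_n(X_n,Z_n)}\big)=0,$$ where $P_{X_nY_n}(x,y)=P_{X_n}(x)W_{Y_n|X_n}(y|x)$. *)

From Stdlib Require Import Reals List ClassicalEpsilon.
Import ListNotations.
Open Scope R_scope.

Definition countable (T : Type) : Prop :=
  exists f : T -> nat, forall a b, f a = f b -> a = b.

Definition lsum {T : Type} (f : T -> R) (l : list T) : R :=
  fold_right (fun a acc => f a + acc) 0 l.

(** Unordered sum of a (nonnegative) family: least upper bound of the sums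
    over finite sets of distinct indices. *)
Definition has_tsum {T : Type} (f : T -> R) (s : R) : Prop :=
  is_lub (fun v => exists l : list T, NoDup l /\ v = lsum f l) s.

Definition tsum {T : Type} (f : T -> R) : R :=
  epsilon (inhabits 0) (fun s => has_tsum f s).

Definition is_pmf {T : Type} (p : T -> R) : Prop :=
  (forall a, 0 <= p a) /\ has_tsum p 1.

Definition vdist {T : Type} (P Q : T -> R) : R :=
  tsum (fun a => Rabs (P a - Q a)).

Definition joint {X Y : Type} (PX : X -> R) (W : X -> Y -> R) : X * Y -> R :=
  fun a => PX (fst a) * W (fst a) (snd a).

(** Law of (X, phi(X,Z)): P_X(x) * sum_{z : phi x z = y} P_{Z|X}(z|x). *)
Definition joint_phi {X Y Z : Type} (PX : X -> R) (PZX : X -> Z -> R)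
  (phi : X -> Z -> Y) : X * Y -> R :=
  fun a => PX (fst a) *
    tsum (fun z => if excluded_middle_informative (phi (fst a) z = snd a)
                   then PZX (fst a) z else 0).

Definition approximating_source (X Y Z : nat -> Type)
  (PX : forall n, X n -> R) (PZX : forall n, X n -> Z n -> R)
  (W : forall n, X n -> Y n -> R) : Prop :=
  exists phi : forall n, X n -> Z n -> Y n,
    Un_cv (fun n => vdist (joint (PX n) (W n)) (joint_phi (PX n) (PZX n) (phi n))) 0.

(** Index set {0,...,k-1} (K = Some k) or all of nat (K = None). *)
Definition in_idx (K : option nat) (i : nat) : Prop :=
  match K with Some k => (i < k)%nat | None => True end.

(** e (0-based) lists the elements of positive probability of p, without
    repetition, in nonincreasing order of probability. *)
Definition sorted_enum {T : Type} (p : T -> R) (e : nat -> T) (K : option nat) : Prop :=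
  (forall i j, in_idx K i -> in_idx K j -> e i = e j -> i = j) /\
  (forall i, in_idx K i -> 0 < p (e i)) /\
  (forall z, 0 < p z -> exists i, in_idx K i /\ e i = z) /\
  (forall i j, in_idx K i -> in_idx K j -> (i <= j)%nat -> p (e j) <= p (e i)).

(** delta_k = sum_{i<k} p(e i) (sum of the first k listed probabilities). *)
Fixpoint psum {T : Type} (p : T -> R) (e : nat -> T) (k : nat) : R :=
  match k with
  | O => 0
  | S k' => psum p e k' + p (e k')
  end.

(** c(delta) = log (1 / p(z_k)) where delta_{k-1} <= delta < delta_k
    (here with 0-based index k: psum k <= delta < psum (k+1)). *)
Definition cfun {T : Type} (p : T -> R) (delta : R) : R :=
  epsilon (inhabits 0) (fun c =>
    exists (e : nat -> T) (K : option nat), sorted_enum p e K /\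
    exists k, in_idx K k /\ psum p e k <= delta < psum p e (S k) /\
              c = ln (/ p (e k))).

Definition Rinf (E : R -> Prop) : R :=
  epsilon (inhabits 0) (fun m =>
    (forall x, E x -> m <= x) /\ (forall b, (forall x, E x -> b <= x) -> b <= m)).

(** Lebesgue (outer) measure: infimum of total lengths of countable open
    interval covers. *)
Definition lebesgue (A : R -> Prop) : R :=
  Rinf (fun s => exists a b : nat -> R,
    (forall i, a i <= b i) /\
    (forall x, A x -> exists i, a i < x < b i) /\
    infinite_sum (fun i => b i - a i) s).

(* Let Q_x be the law of phi_n(x, Z_n) given X_n = x, so that the
   variational distance is V_n = sum_x P_X(x) sum_y |W(y|x) - Q_x(y)|.  Suppose
   delta lies in D_n(x) and put a = exp(-c^{z|x}(delta+eps)), b = exp(-c^w(delta)),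
   so that b < e^-gamma a.  By the level-set description of c, the atoms of
   P_{Z|X}(.|x) of probability >= a carry mass > delta + eps, and phi maps them
   to outputs y with Q_x(y) >= a; while outside a set of W-mass <= delta every
   output has W(y|x) <= b.  Comparing the two gives
   sum_y |W(y|x) - Q_x(y)| >= c := (1 - e^-gamma) eps.  As D_n(x) lies in [0,1)
   its measure is at most 2, and it is empty unless this mismatch occurs, so
   E[mu(D_n(X_n))] <= (2/c) V_n -> 0 (a Markov inequality). *)

From Stdlib Require Import Reals List ClassicalEpsilon Classical Lia Lra FinFun.
Import ListNotations.
Open Scope R_scope.

(** Finite sums over lists *)

Lemma lsum_nil {T} (f : T -> R) : lsum f [] = 0.
Proof. reflexivity. Qed.

Lemma lsum_cons {T} (f : T -> R) a l : lsum f (a :: l) = f a + lsum f l.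
Proof. reflexivity. Qed.

Lemma lsum_app {T} (f : T -> R) l1 l2 : lsum f (l1 ++ l2) = lsum f l1 + lsum f l2.
Proof.
  induction l1 as [|a l1 IH]; simpl app; rewrite ?lsum_cons, ?lsum_nil; [ring|].
  rewrite IH; ring.
Qed.

Lemma lsum_le {T} (f g : T -> R) l :
  (forall a, In a l -> f a <= g a) -> lsum f l <= lsum g l.
Proof.
  induction l as [|a l IH]; intros H; rewrite ?lsum_cons, ?lsum_nil; [lra|].
  assert (f a <= g a) by (apply H; left; auto).
  assert (lsum f l <= lsum g l) by (apply IH; intros; apply H; right; auto).
  lra.
Qed.

Lemma lsum_ext {T} (f g : T -> R) l :
  (forall a, In a l -> f a = g a) -> lsum f l = lsum g l.
Proof. intros H; apply Rle_antisym; apply lsum_le; intros a Ha; rewrite (H a Ha); lra. Qed.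

Lemma lsum_zero {T} (l : list T) : lsum (fun _ => 0) l = 0.
Proof. induction l; rewrite ?lsum_cons, ?lsum_nil; [|rewrite IHl]; ring. Qed.

Lemma lsum_nonneg {T} (f : T -> R) l : (forall a, In a l -> 0 <= f a) -> 0 <= lsum f l.
Proof. intros H; rewrite <- (lsum_zero l); apply lsum_le; auto. Qed.

Lemma lsum_plus {T} (f g : T -> R) l :
  lsum (fun a => f a + g a) l = lsum f l + lsum g l.
Proof. induction l; rewrite ?lsum_cons, ?lsum_nil; [|rewrite IHl]; ring. Qed.

Lemma lsum_scal {T} (f : T -> R) c l : lsum (fun a => c * f a) l = c * lsum f l.
Proof. induction l; rewrite ?lsum_cons, ?lsum_nil; [|rewrite IHl]; ring. Qed.

Lemma lsum_map {A B} (f : B -> R) (g : A -> B) l :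
  lsum f (map g l) = lsum (fun a => f (g a)) l.
Proof. induction l; simpl map; rewrite ?lsum_cons, ?lsum_nil; [|rewrite IHl]; ring. Qed.

Lemma lsum_swap {A B} (h : A -> B -> R) la lb :
  lsum (fun a => lsum (h a) lb) la = lsum (fun b => lsum (fun a => h a b) la) lb.
Proof.
  induction la as [|a la IH]; rewrite ?lsum_cons, ?lsum_nil.
  - symmetry; apply lsum_zero.
  - rewrite IH, <- lsum_plus. apply lsum_ext; intros; rewrite lsum_cons; ring.
Qed.

Lemma lsum_prod {A B} (f : A * B -> R) xs ys :
  lsum f (list_prod xs ys) = lsum (fun x => lsum (fun y => f (x, y)) ys) xs.
Proof.
  induction xs as [|x xs IH]; [reflexivity|].
  change (list_prod (x :: xs) ys) with (map (fun y => (x, y)) ys ++ list_prod xs ys).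
  rewrite lsum_app, lsum_map, IH, lsum_cons. reflexivity.
Qed.

Lemma lsum_le_superset {T} (f : T -> R) (l m : list T) :
  NoDup l -> (forall a, In a l -> 0 < f a -> In a m) -> (forall a, 0 <= f a) ->
  lsum f l <= lsum f m.
Proof.
  revert m; induction l as [|a l IH]; intros m Hnd Hinc Hnn.
  - rewrite lsum_nil; apply lsum_nonneg; auto.
  - apply NoDup_cons_iff in Hnd as [Hna Hnd]. rewrite lsum_cons.
    destruct (Rle_lt_or_eq_dec 0 (f a) (Hnn a)) as [Hpos|Hzero].
    + assert (Ham : In a m) by (apply Hinc; [left|]; auto).
      destruct (in_split a m Ham) as [m1 [m2 ->]].
      assert (Hrest : lsum f l <= lsum f (m1 ++ m2)).
      { apply IH; auto. intros b Hb Hfb.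
        assert (Hbm : In b (m1 ++ a :: m2)) by (apply Hinc; [right|]; auto).
        apply in_app_iff in Hbm as [H|[H|H]]; apply in_app_iff; auto.
        subst; contradiction. }
      rewrite lsum_app, lsum_cons; rewrite lsum_app in Hrest. lra.
    + rewrite <- Hzero. assert (lsum f l <= lsum f m); [|lra].
      apply IH; auto. intros; apply Hinc; [right|]; auto.
Qed.

Lemma lsum_ge_const {T} (f : T -> R) a l :
  (forall v, In v l -> a <= f v) -> INR (length l) * a <= lsum f l.
Proof.
  induction l as [|v l IH]; intros H; simpl length; rewrite ?lsum_cons, ?lsum_nil; [simpl; lra|].
  rewrite S_INR. assert (a <= f v) by (apply H; left; auto).
  assert (INR (length l) * a <= lsum f l) by (apply IH; intros; apply H; right; auto).
  lra.
Qed.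

Lemma nodup_filter {T} (l : list T) (Pr : T -> Prop) :
  exists m, NoDup m /\ forall y, In y m <-> In y l /\ Pr y.
Proof.
  induction l as [|a l [m [Hm Hiff]]].
  - exists []; split; [constructor|]. intros y; simpl; tauto.
  - destruct (classic (Pr a /\ ~ In a m)) as [[Ha Hn]|Hc].
    + exists (a :: m); split; [constructor; auto|]. intros y; simpl; rewrite Hiff.
      split; [intros [<-|H]; tauto|]. intros [[<-|H] Hp]; auto.
    + exists m; split; auto. intros y; simpl; rewrite Hiff. split; [tauto|].
      intros [[<-|H] Hp]; auto. apply NNPP; intro Hn. apply Hc; split; auto.
      rewrite Hiff; tauto.
Qed.

Lemma lsum_indicator_one {T} (m : list T) (Pr : T -> Prop) (g : T -> R) y0 :
  NoDup m -> In y0 m -> (forall y, In y m -> (Pr y <-> y = y0)) ->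
  lsum (fun y => if excluded_middle_informative (Pr y) then g y else 0) m = g y0.
Proof.
  induction m as [|a m IH]; intros Hnd Hin Hiff; [destruct Hin|].
  apply NoDup_cons_iff in Hnd as [Hna Hnd]. rewrite lsum_cons.
  destruct Hin as [<-|Hin].
  - destruct (excluded_middle_informative (Pr a)) as [_|Hn];
      [|exfalso; apply Hn, Hiff; simpl; auto].
    rewrite (lsum_ext _ (fun _ => 0)); [rewrite lsum_zero; ring|].
    intros y Hy. destruct (excluded_middle_informative (Pr y)) as [Hp|]; auto.
    apply Hiff in Hp; [subst; contradiction|right; auto].
  - destruct (excluded_middle_informative (Pr a)) as [Hp|Hn].
    + apply Hiff in Hp; [subst; contradiction|left; auto].
    + rewrite IH; auto; [ring|]. intros; apply Hiff; right; auto.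
Qed.

Lemma lsum_indicator_none {T} (m : list T) (Pr : T -> Prop) (g : T -> R) :
  (forall y, In y m -> ~ Pr y) ->
  lsum (fun y => if excluded_middle_informative (Pr y) then g y else 0) m = 0.
Proof.
  intros H. rewrite (lsum_ext _ (fun _ => 0)); [apply lsum_zero|].
  intros y Hy; destruct (excluded_middle_informative (Pr y)); auto.
  exfalso; eapply H; eauto.
Qed.

(** Unordered sums *)

Lemma has_tsum_le {T} (f : T -> R) s l : has_tsum f s -> NoDup l -> lsum f l <= s.
Proof. intros [Hub _] Hl. apply Hub. exists l; auto. Qed.

Lemma has_tsum_least {T} (f : T -> R) s M :
  has_tsum f s -> (forall l, NoDup l -> lsum f l <= M) -> s <= M.
Proof. intros [_ Hl] H. apply Hl. intros v [l [Hnd ->]]; auto. Qed.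

Lemma has_tsum_nonneg {T} (f : T -> R) s : has_tsum f s -> 0 <= s.
Proof. intros H. rewrite <- (lsum_nil f). apply has_tsum_le with (l := []); auto; constructor. Qed.

Lemma tsum_spec {T} (f : T -> R) M :
  (forall l, NoDup l -> lsum f l <= M) -> has_tsum f (tsum f).
Proof.
  intros H. unfold tsum. apply epsilon_spec.
  destruct (completeness (fun v => exists l : list T, NoDup l /\ v = lsum f l)) as [s Hs].
  - exists M. intros v [l [Hl ->]]; auto.
  - exists 0, []. split; [constructor|reflexivity].
  - exists s; exact Hs.
Qed.

Lemma has_tsum_approx {T} (f : T -> R) s eta : has_tsum f s -> 0 < eta ->
  exists l, NoDup l /\ s - eta < lsum f l.
Proof.
  intros H He. apply NNPP; intro Hn.
  assert (s <= s - eta); [|lra].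
  apply (has_tsum_least f s); auto. intros l Hl.
  apply Rnot_lt_le. intro Hlt. apply Hn. exists l; auto.
Qed.

(** Probability mass functions *)

Lemma pmf_nonneg {T} (p : T -> R) a : is_pmf p -> 0 <= p a.
Proof. intros [H _]; auto. Qed.

Lemma pmf_lsum_le1 {T} (p : T -> R) l : is_pmf p -> NoDup l -> lsum p l <= 1.
Proof. intros [_ H] Hl; apply has_tsum_le; auto. Qed.

Lemma pmf_inhabited {T} (p : T -> R) : is_pmf p -> inhabited T.
Proof.
  intros [_ Hts]. destruct (has_tsum_approx p 1 1 Hts) as [[|z l] [_ Hl]]; [lra| |].
  - rewrite lsum_nil in Hl; lra.
  - exact (inhabits z).
Qed.

Lemma pmf_few_heavy_atoms {T} (p : T -> R) a l : is_pmf p -> NoDup l ->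
  (forall v, In v l -> a <= p v) -> INR (length l) * a <= 1.
Proof.
  intros Hp Hl Hv.
  eapply Rle_trans; [apply lsum_ge_const; eauto|apply pmf_lsum_le1; auto].
Qed.

Lemma pmf_heavy_atoms_finite {T} (p : T -> R) a : is_pmf p -> 0 < a ->
  exists L, forall v, a <= p v -> In v L.
Proof.
  intros Hp Ha.
  set (Heavy := fun n => exists l, NoDup l /\ length l = n /\ forall v, In v l -> a <= p v).
  assert (Hmax : exists n, Heavy n /\ ~ Heavy (S n)).
  { apply NNPP; intro Hn.
    assert (Hall : forall n, Heavy n).
    { induction n as [|n IH].
      - exists []; repeat split; [constructor|intros v []].
      - apply NNPP; intro H'. apply Hn; eauto. }
    destruct (INR_archimed a 1 Ha) as [n Hn'].
    destruct (Hall n) as [l [Hl [<- Hv]]].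
    pose proof (pmf_few_heavy_atoms p a l Hp Hl Hv). lra. }
  destruct Hmax as [n [[l [Hl [Hlen Hv]]] Hns]].
  exists l. intros v Hav. apply NNPP; intro Hnin. apply Hns.
  exists (v :: l). repeat split; [constructor; auto|simpl; lia|].
  intros w [<-|Hw]; auto.
Qed.

(** Sorted enumerations of the atoms of a pmf *)

Lemma in_idx_down K i j : in_idx K j -> (i <= j)%nat -> in_idx K i.
Proof. destruct K; simpl; auto; lia. Qed.

Lemma least_nat (P : nat -> Prop) :
  (exists n, P n) -> exists n, P n /\ forall m, (m < n)%nat -> ~ P m.
Proof.
  intros [n Hn]. revert Hn. pattern n. apply (well_founded_ind Nat.lt_wf_0). clear n.
  intros n IH Hn. destruct (classic (exists m, (m < n)%nat /\ P m)) as [[m [Hm Pm]]|H].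
  - apply (IH m Hm Pm).
  - exists n; split; auto. intros m Hm Pm; apply H; eauto.
Qed.

Lemma list_argmax {T} (f : T -> R) (Pr : T -> Prop) L :
  (exists v, In v L /\ Pr v) ->
  exists z, In z L /\ Pr z /\ forall u, In u L -> Pr u -> f u <= f z.
Proof.
  induction L as [|b L IH]; intros [v [Hv Hpv]]; [destruct Hv|].
  destruct (classic (exists v, In v L /\ Pr v)) as [Hex|Hnex].
  - destruct (IH Hex) as [z [Hz [Hpz Hmax]]].
    destruct (classic (Pr b /\ f z <= f b)) as [[Hb1 Hb2]|Hb].
    + exists b. split; [left; auto|split; auto].
      intros u [<-|Hu] Hpu; [lra|]. specialize (Hmax u Hu Hpu); lra.
    + exists z. split; [right; auto|split; auto].
      intros u [<-|Hu] Hpu; auto. apply Rnot_lt_le; intro; apply Hb; split; auto; lra.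
  - destruct Hv as [<-|Hv]; [|exfalso; apply Hnex; eauto].
    exists b. split; [left; auto|split; auto].
    intros u [<-|Hu] Hpu; [lra|exfalso; apply Hnex; eauto].
Qed.

Lemma psum_bracket {T} (p : T -> R) (e : nat -> T) d N :
  0 <= d -> d < psum p e N -> exists k, (k < N)%nat /\ psum p e k <= d < psum p e (S k).
Proof.
  intros Hd HN. induction N as [|N IH]; simpl in HN; [lra|].
  destruct (Rle_lt_dec (psum p e N) d) as [Hle|Hlt].
  - exists N; split; [lia|simpl; lra].
  - destruct (IH Hlt) as [k [Hk1 Hk2]]; exists k; split; auto.
Qed.

(* The greedy enumeration repeatedly picks a most probable atom not yet listed;
   it stops (at horizon K = Some k) exactly when no atom is left. *)
Section GreedyEnumeration.
Context {T : Type} (p : T -> R) (Hp : is_pmf p) (z0 : T).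

Definition most_probable_outside (l : list T) (z : T) : Prop :=
  0 < p z /\ ~ In z l /\ forall w, ~ In w l -> p w <= p z.

Lemma most_probable_exists l :
  (exists w, ~ In w l /\ 0 < p w) -> exists z, most_probable_outside l z.
Proof.
  intros [w [Hw Hpw]].
  destruct (pmf_heavy_atoms_finite p (p w) Hp Hpw) as [L HL].
  destruct (list_argmax p (fun u => ~ In u l /\ p w <= p u) L) as [z [Hz [[Hzl Hwz] Hmax]]].
  { exists w; repeat split; auto; [apply HL|]; lra. }
  exists z; repeat split; auto; [lra|]. intros u Hul.
  destruct (Rle_lt_dec (p w) (p u)); [apply Hmax; auto|lra].
Qed.

Definition greedy_pick (l : list T) : T := epsilon (inhabits z0) (most_probable_outside l).

Fixpoint greedy_prefix (n : nat) : list T :=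
  match n with O => [] | S n => greedy_prefix n ++ [greedy_pick (greedy_prefix n)] end.

Definition greedy (i : nat) : T := greedy_pick (greedy_prefix i).

Definition greedy_defined (i : nat) : Prop := exists z, most_probable_outside (greedy_prefix i) z.

Lemma greedy_spec i : greedy_defined i -> most_probable_outside (greedy_prefix i) (greedy i).
Proof. intros H. unfold greedy, greedy_pick. apply epsilon_spec; auto. Qed.

Lemma greedy_prefix_in w n : In w (greedy_prefix n) <-> exists i, (i < n)%nat /\ greedy i = w.
Proof.
  induction n as [|n IH]; simpl.
  - split; [intros []|intros [i [Hi _]]; lia].
  - rewrite in_app_iff, IH. simpl. split.
    + intros [[i [Hi Hw]]|[Hw|[]]]; [exists i; split; auto; lia|exists n; auto].
    + intros [i [Hi Hw]]. destruct (Nat.eq_dec i n); [subst; right; left; auto|].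
      left; exists i; split; auto; lia.
Qed.

Lemma greedy_prefix_length n : length (greedy_prefix n) = n.
Proof. induction n as [|n IH]; simpl; auto. rewrite length_app, IH; simpl; lia. Qed.

Lemma psum_greedy_prefix n : psum p greedy n = lsum p (greedy_prefix n).
Proof.
  induction n as [|n IH]; [reflexivity|]. simpl psum; simpl greedy_prefix.
  rewrite lsum_app, IH, lsum_cons, lsum_nil. unfold greedy. ring.
Qed.

Lemma greedy_prefix_nodup n :
  (forall i, (i < n)%nat -> greedy_defined i) -> NoDup (greedy_prefix n).
Proof.
  induction n as [|n IH]; intros H; simpl; [constructor|].
  apply NoDup_app; [apply IH; intros; apply H; lia|repeat constructor; auto|].
  intros a Ha [Hb|[]]. subst.
  destruct (greedy_spec n) as [_ [Hn _]]; [apply H; lia|]. apply Hn; auto.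
Qed.

Lemma greedy_horizon : exists K,
  (forall i, in_idx K i -> greedy_defined i) /\ (forall k, K = Some k -> ~ greedy_defined k).
Proof.
  destruct (classic (exists k, ~ greedy_defined k)) as [Hex|Hn].
  - destruct (least_nat _ Hex) as [k [Hk Hl]]. exists (Some k); split.
    + intros i Hi; simpl in Hi. apply NNPP; apply Hl; auto.
    + intros k' [= <-]; auto.
  - exists None; split; [intros; apply NNPP; intro; apply Hn; eauto|discriminate].
Qed.

Section Horizon.
Variable K : option nat.
Hypothesis HKdefined : forall i, in_idx K i -> greedy_defined i.
Hypothesis HKstop : forall k, K = Some k -> ~ greedy_defined k.

Lemma greedy_fresh i j : in_idx K j -> (i <= j)%nat -> ~ In (greedy j) (greedy_prefix i).
Proof.
  intros Hj Hij Hin. destruct (greedy_spec j (HKdefined j Hj)) as [_ [Hn _]]. apply Hn.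
  apply greedy_prefix_in in Hin as [m [Hm Hw]]. apply greedy_prefix_in; exists m; split; auto; lia.
Qed.

(* Every atom is eventually listed: otherwise it would stop the enumeration at a
   finite horizon, or be dominated by infinitely many distinct atoms. *)
Lemma greedy_covers z : 0 < p z -> exists i, in_idx K i /\ greedy i = z.
Proof.
  intros Hz. apply NNPP; intro Hn.
  assert (Hzfresh : forall i, (forall m, (m < i)%nat -> in_idx K m) -> ~ In z (greedy_prefix i)).
  { intros i Hi Hin. apply greedy_prefix_in in Hin as [m [Hm Hw]]. apply Hn; exists m; auto. }
  destruct K as [k|].
  - apply (HKstop k eq_refl), most_probable_exists. exists z; split; auto.
  - assert (Hdom : forall i, p z <= p (greedy i)).
    { intros i. destruct (greedy_spec i (HKdefined i I)) as [_ [_ Hmax]].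
      apply Hmax, Hzfresh; simpl; auto. }
    destruct (INR_archimed (p z) 1 Hz) as [N HN].
    assert (Hmass : INR (length (greedy_prefix N)) * p z <= 1).
    { apply (pmf_few_heavy_atoms p); auto.
      - apply greedy_prefix_nodup; intros; apply HKdefined; exact I.
      - intros v Hv. apply greedy_prefix_in in Hv as [i [_ <-]]; auto. }
    rewrite greedy_prefix_length in Hmass. lra.
Qed.

Lemma greedy_sorted : sorted_enum p greedy K.
Proof.
  repeat split.
  - intros i j Hi Hj Heq. destruct (Nat.lt_total i j) as [Hlt|[|Hlt]]; auto; exfalso.
    + apply (greedy_fresh j j Hj (le_n j)). apply greedy_prefix_in. exists i; auto.
    + apply (greedy_fresh i i Hi (le_n i)). apply greedy_prefix_in. exists j; auto.
  - intros i Hi. destruct (greedy_spec i (HKdefined i Hi)); auto.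
  - exact greedy_covers.
  - intros i j Hi Hj Hij. destruct (greedy_spec i (HKdefined i Hi)) as [_ [_ Hmax]].
    apply Hmax, greedy_fresh; auto.
Qed.

Lemma greedy_mass_exceeds d : d < 1 ->
  exists N, (forall i, (i < N)%nat -> in_idx K i) /\ d < psum p greedy N.
Proof.
  intros Hd. destruct Hp as [Hnn Hts].
  destruct (has_tsum_approx p 1 (1 - d) Hts) as [l [Hl Hlt]]; [lra|].
  assert (HN : exists N, (forall i, (i < N)%nat -> in_idx K i) /\
                 forall a, In a l -> 0 < p a -> In a (greedy_prefix N)).
  { clear Hl Hlt. induction l as [|b l [N [HNK HN]]].
    - exists O; split; [intros; lia|intros a []].
    - destruct (Rlt_le_dec 0 (p b)) as [Hb|Hb].
      + destruct (greedy_covers b Hb) as [i [HiK Hi]]. exists (Nat.max N (S i)). split.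
        * intros m Hm. destruct (Nat.lt_ge_cases m N); [auto|].
          apply in_idx_down with i; auto; lia.
        * intros a [<-|Ha] Hpa; apply greedy_prefix_in.
          -- exists i; split; auto; lia.
          -- apply HN, greedy_prefix_in in Ha as [m [Hm Hw]]; auto. exists m; split; auto; lia.
      + exists N; split; auto. intros a [<-|Ha] Hpa; [lra|auto]. }
  destruct HN as [N [HNK HN]]. exists N; split; auto.
  rewrite psum_greedy_prefix. assert (lsum p l <= lsum p (greedy_prefix N)); [|lra].
  apply lsum_le_superset; auto.
Qed.
End Horizon.
End GreedyEnumeration.

Lemma sorted_enum_exists {T} (p : T -> R) : is_pmf p ->
  exists e K, sorted_enum p e K /\
    forall d, 0 <= d < 1 -> exists k, in_idx K k /\ psum p e k <= d < psum p e (S k).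
Proof.
  intros Hp. destruct (pmf_inhabited p Hp) as [z0].
  destruct (greedy_horizon p z0) as [K [HKdef HKstop]].
  exists (greedy p z0), K. split; [apply greedy_sorted; auto|].
  intros d [Hd0 Hd1].
  destruct (greedy_mass_exceeds p Hp z0 K HKdef HKstop d Hd1) as [N [HNK HNd]].
  destruct (psum_bracket p (greedy p z0) d N Hd0 HNd) as [k [Hk Hkd]].
  exists k; split; auto.
Qed.

Lemma cfun_spec {T} (p : T -> R) d : is_pmf p -> 0 <= d < 1 ->
  exists e K k, sorted_enum p e K /\ in_idx K k /\ psum p e k <= d < psum p e (S k) /\
    cfun p d = ln (/ p (e k)).
Proof.
  intros Hp Hd.
  assert (Hex : exists c, exists (e : nat -> T) (K : option nat), sorted_enum p e K /\
    exists k, in_idx K k /\ psum p e k <= d < psum p e (S k) /\ c = ln (/ p (e k))).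
  { destruct (sorted_enum_exists p Hp) as [e [K [Hs Hbr]]].
    destruct (Hbr d Hd) as [k [Hk Hkd]].
    exists (ln (/ p (e k))), e, K; split; auto. exists k; auto. }
  destruct (epsilon_spec (inhabits 0) _ Hex) as [e [K [Hs [k [Hk [Hkd Hc]]]]]].
  exists e, K, k; auto.
Qed.

Lemma sorted_enum_prefix {T} (p : T -> R) e K n : sorted_enum p e K ->
  (forall i, (i < n)%nat -> in_idx K i) ->
  NoDup (map e (seq 0 n)) /\ lsum p (map e (seq 0 n)) = psum p e n /\
  (forall w, In w (map e (seq 0 n)) <-> exists i, (i < n)%nat /\ e i = w).
Proof.
  intros [Hinj _]. induction n as [|n IH]; intros HK.
  - simpl. repeat split; [constructor|intros []|intros [i [Hi _]]; lia].
  - destruct IH as [Hnd [Hs Hin]]; [intros; apply HK; lia|].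
    rewrite seq_S, map_app. simpl plus. repeat split.
    + apply NoDup_app; auto; [repeat constructor; intros []|].
      intros a Ha [Hb|[]]. apply Hin in Ha as [i [Hi Hei]]. subst a.
      assert (i = n) by (apply Hinj; auto; apply HK; lia). lia.
    + rewrite lsum_app, Hs. simpl map. rewrite lsum_cons, lsum_nil. simpl psum. ring.
    + intros Hw. apply in_app_iff in Hw as [Hw|[Hw|[]]].
      * apply Hin in Hw as [i [Hi Hw]]; exists i; split; auto; lia.
      * exists n; split; auto.
    + intros [i [Hi Hw]]. apply in_app_iff. destruct (Nat.eq_dec i n).
      * subst; right; left; auto.
      * left; apply Hin; exists i; split; auto; lia.
Qed.

Lemma cfun_level_sets {T} (p : T -> R) d : is_pmf p -> 0 <= d < 1 ->
  (exists L, NoDup L /\ d < lsum p L /\ forall z, In z L -> exp (- cfun p d) <= p z) /\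
  (exists L, NoDup L /\ lsum p L <= d /\ forall z, ~ In z L -> p z <= exp (- cfun p d)).
Proof.
  intros Hp Hd.
  destruct (cfun_spec p d Hp Hd) as [e [K [k [Hs [Hk [[Hlo Hhi] Hc]]]]]].
  pose proof Hs as [_ [Hpos [Hcov Hmono]]].
  assert (Ht : exp (- cfun p d) = p (e k)).
  { rewrite Hc, ln_Rinv, Ropp_involutive, exp_ln by auto. reflexivity. }
  rewrite Ht. split.
  - destruct (sorted_enum_prefix p e K (S k) Hs) as [Hnd [Hsum Hin]].
    { intros i Hi; apply in_idx_down with k; auto; lia. }
    exists (map e (seq 0 (S k))). split; [auto|split; [lra|]].
    intros z Hz. apply Hin in Hz as [i [Hi <-]].
    apply Hmono; auto; [apply in_idx_down with k; auto|]; lia.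
  - destruct (sorted_enum_prefix p e K k Hs) as [Hnd [Hsum Hin]].
    { intros i Hi; apply in_idx_down with k; auto; lia. }
    exists (map e (seq 0 k)). split; [auto|split; [lra|]].
    intros z Hz. destruct (Rlt_le_dec 0 (p z)) as [Hpz|Hpz]; [|left; apply Rle_lt_trans with 0; auto].
    destruct (Hcov z Hpz) as [i [Hi <-]]. destruct (Nat.lt_ge_cases i k) as [Hik|Hki].
    + exfalso; apply Hz, Hin; eauto.
    + apply Hmono; auto.
Qed.

(** The law Q(y) = P(phi^-1(y)) of phi(Z) for Z ~ P *)

Section ImageLaw.
Context {Z Y : Type} (P : Z -> R) (phi : Z -> Y) (HP : is_pmf P).

Definition preimage_weight (y : Y) (z : Z) : R :=
  if excluded_middle_informative (phi z = y) then P z else 0.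

Definition image_law (y : Y) : R := tsum (preimage_weight y).

Lemma preimage_weight_bounds y z : 0 <= preimage_weight y z <= P z.
Proof.
  pose proof (pmf_nonneg P z HP).
  unfold preimage_weight; destruct excluded_middle_informative; lra.
Qed.

Lemma image_law_has_tsum y : has_tsum (preimage_weight y) (image_law y).
Proof.
  apply (tsum_spec _ 1). intros l Hl.
  eapply Rle_trans; [apply lsum_le; intros; apply preimage_weight_bounds|].
  apply pmf_lsum_le1; auto.
Qed.

Lemma image_law_nonneg y : 0 <= image_law y.
Proof. eapply has_tsum_nonneg, image_law_has_tsum. Qed.

Lemma image_law_ge_lsum y l : NoDup l -> lsum (preimage_weight y) l <= image_law y.
Proof. intros; apply has_tsum_le; auto; apply image_law_has_tsum. Qed.

Lemma image_law_ge_atom z : P z <= image_law (phi z).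
Proof.
  replace (P z) with (lsum (preimage_weight (phi z)) [z]).
  - apply image_law_ge_lsum; repeat constructor; intros [].
  - rewrite lsum_cons, lsum_nil. unfold preimage_weight.
    destruct excluded_middle_informative; [ring|tauto].
Qed.

Lemma image_law_finite_approx ys eta : 0 < eta -> exists lz, NoDup lz /\
  lsum image_law ys <= lsum (fun y => lsum (preimage_weight y) lz) ys + eta.
Proof.
  revert eta; induction ys as [|y ys IH]; intros eta He.
  - exists []; split; [constructor|]. rewrite !lsum_nil; lra.
  - destruct (IH (eta / 2)) as [lz' [Hlz' Hs]]; [lra|].
    destruct (has_tsum_approx _ _ (eta / 2) (image_law_has_tsum y)) as [ly [Hly Hy]]; [lra|].
    destruct (nodup_filter (ly ++ lz') (fun _ => True)) as [lz [Hlz Hiff]].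
    assert (Hsup : forall y' l, NoDup l -> (forall a, In a l -> In a lz) ->
              lsum (preimage_weight y') l <= lsum (preimage_weight y') lz).
    { intros y' l Hl Hsub. apply lsum_le_superset; auto.
      intros; apply preimage_weight_bounds. }
    assert (Hy' : lsum (preimage_weight y) ly <= lsum (preimage_weight y) lz).
    { apply Hsup; auto. intros a Ha; apply Hiff; split; auto; apply in_app_iff; auto. }
    assert (Hys : lsum (fun y0 => lsum (preimage_weight y0) lz') ys <=
                  lsum (fun y0 => lsum (preimage_weight y0) lz) ys).
    { apply lsum_le. intros b _. apply Hsup; auto.
      intros a Ha; apply Hiff; split; auto; apply in_app_iff; auto. }
    exists lz; split; auto. rewrite !lsum_cons. lra.
Qed.

Lemma image_law_mass_le1 ys : NoDup ys -> lsum image_law ys <= 1.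
Proof.
  intros Hys. apply Rle_plus_epsilon. intros eta He.
  destruct (image_law_finite_approx ys eta He) as [lz [Hlz Hs]].
  rewrite lsum_swap in Hs.
  assert (Hfib : lsum (fun z => lsum (fun y => preimage_weight y z) ys) lz <= lsum P lz).
  { apply lsum_le. intros z _. unfold preimage_weight.
    destruct (classic (In (phi z) ys)) as [Hin|Hnin].
    - rewrite (lsum_indicator_one ys (fun y => phi z = y) (fun _ => P z) (phi z)); auto; [lra|].
      intros; split; auto.
    - rewrite lsum_indicator_none; [apply (pmf_nonneg P z HP)|]. intros y Hy <-; contradiction. }
  pose proof (pmf_lsum_le1 P lz HP Hlz). lra.
Qed.

Lemma image_mass Zs : NoDup Zs -> exists S, NoDup S /\ lsum P Zs <= lsum image_law S /\
  forall y, In y S -> exists z, In z Zs /\ phi z = y.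
Proof.
  intros HZs. destruct (nodup_filter (map phi Zs) (fun _ => True)) as [S [HS Hiff]].
  exists S. split; [auto|split].
  - rewrite (lsum_ext P (fun z => lsum (fun y => preimage_weight y z) S)).
    + rewrite <- lsum_swap. apply lsum_le. intros y _. apply image_law_ge_lsum; auto.
    + intros z Hz. unfold preimage_weight. symmetry.
      apply (lsum_indicator_one S (fun y => phi z = y) (fun _ => P z) (phi z)); auto.
      * apply Hiff; split; auto. apply in_map; auto.
      * intros; split; auto.
  - intros y Hy. apply Hiff in Hy as [Hy _]. apply in_map_iff in Hy as [z [<- Hz]]. eauto.
Qed.
End ImageLaw.

(** From a cost gap to a variational mismatch *)

Lemma mismatch_lower_bound {Y} (Wy Q : Y -> R) (T S : list Y) d eps a b E :
  (forall y, 0 <= Q y) -> NoDup T -> NoDup S ->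
  lsum Wy T <= d -> (forall y, ~ In y T -> Wy y <= b) ->
  d + eps < lsum Q S -> (forall y, In y S -> a <= Q y) ->
  b <= E * a -> 0 <= E <= 1 ->
  exists L, NoDup L /\ (1 - E) * eps <= lsum (fun y => Rabs (Wy y - Q y)) L.
Proof.
  intros HQ HT HS HWT Hlight HQS Hheavy Hba HE.
  set (f := fun y => Rabs (Wy y - Q y)).
  destruct (nodup_filter S (fun y => ~ In y T)) as [S' [HS' HinS']].
  assert (Hsplit : lsum Q S <= lsum Q S' + lsum Q T).
  { rewrite <- lsum_app. apply lsum_le_superset; auto. intros y Hy _. apply in_app_iff.
    destruct (classic (In y T)); [right; auto|left; apply HinS'; auto]. }
  assert (HfS' : (1 - E) * lsum Q S' <= lsum f S').
  { rewrite <- lsum_scal. apply lsum_le. intros y Hy. apply HinS' in Hy as [Hy HnT].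
    pose proof (Hlight y HnT). pose proof (Hheavy y Hy).
    assert (E * a <= E * Q y) by (apply Rmult_le_compat_l; lra).
    unfold f. rewrite Rabs_minus_sym. eapply Rle_trans; [|apply Rle_abs]. lra. }
  assert (HfT : lsum Q T <= lsum Wy T + lsum f T).
  { rewrite <- lsum_plus. apply lsum_le. intros y _. unfold f.
    pose proof (Rle_abs (Q y - Wy y)). rewrite Rabs_minus_sym in H. lra. }
  assert (Hf0 : 0 <= lsum f T) by (apply lsum_nonneg; intros; apply Rabs_pos).
  exists (T ++ S'). split.
  { apply NoDup_app; auto. intros y Hy Hy'. apply HinS' in Hy' as [_ H]; contradiction. }
  fold f. rewrite lsum_app.
  assert ((1 - E) * (eps - lsum f T) <= (1 - E) * lsum Q S') by (apply Rmult_le_compat_l; lra).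
  assert (0 <= E * lsum f T) by (apply Rmult_le_pos; lra).
  lra.
Qed.

Lemma cost_gap_forces_mismatch {Z Y} (P : Z -> R) (Wy : Y -> R) (phi : Z -> Y) eps gamma d :
  is_pmf P -> is_pmf Wy -> 0 < eps -> 0 <= gamma -> 0 <= d -> d + eps < 1 ->
  cfun P (d + eps) - cfun Wy d < - gamma ->
  exists L, NoDup L /\
    (1 - exp (- gamma)) * eps <= lsum (fun y => Rabs (Wy y - image_law P phi y)) L.
Proof.
  intros HP HW He Hg Hd Hde Hgap.
  destruct (cfun_level_sets P (d + eps) HP) as [[Zs [HZs [HZmass HZheavy]]] _]; [lra|].
  destruct (cfun_level_sets Wy d HW) as [_ [T [HT [HTmass HTlight]]]]; [lra|].
  destruct (image_mass P phi HP Zs HZs) as [S [HS [HSmass HSpre]]].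
  apply (mismatch_lower_bound Wy (image_law P phi) T S d eps
           (exp (- cfun P (d + eps))) (exp (- cfun Wy d))); auto.
  - intros; apply image_law_nonneg; auto.
  - lra.
  - intros y Hy. destruct (HSpre y Hy) as [z [Hz <-]].
    apply Rle_trans with (P z); [apply HZheavy; auto|apply image_law_ge_atom; auto].
  - rewrite <- exp_plus. apply Rlt_le, exp_increasing. lra.
  - split; [apply Rlt_le, exp_pos|].
    destruct Hg as [Hg|<-]; [left; rewrite <- exp_0; apply exp_increasing; lra|].
    rewrite Ropp_0, exp_0; lra.
Qed.

(** Crude bounds on the Lebesgue outer measure *)

Lemma Rinf_le (E : R -> Prop) m x : E x -> (forall y, E y -> m <= y) -> Rinf E <= x.
Proof.
  intros Hx Hlow.
  assert (H : exists i, (forall x, E x -> i <= x) /\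
                        (forall b, (forall x, E x -> b <= x) -> b <= i)).
  { destruct (completeness (fun y => E (- y))) as [s [Hub Hlub]].
    - exists (- m). intros y Hy. specialize (Hlow _ Hy). lra.
    - exists (- x). rewrite Ropp_involutive; auto.
    - exists (- s); split.
      + intros y Hy. assert (- y <= s) by (apply Hub; rewrite Ropp_involutive; auto). lra.
      + intros b Hb. assert (s <= - b); [|lra]. apply Hlub.
        intros y Hy. specialize (Hb _ Hy). lra. }
  destruct (epsilon_spec (inhabits 0) _ H) as [Hinf _]. apply Hinf; auto.
Qed.

Lemma infinite_sum_nonneg f s : (forall i, 0 <= f i) -> infinite_sum f s -> 0 <= s.
Proof.
  intros Hf Hs. apply Rnot_lt_le; intro Hlt.
  destruct (Hs (- s)) as [N HN]; [lra|].
  specialize (HN N (le_n N)). unfold Rdist in HN.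
  assert (0 <= sum_f_R0 f N) by (apply cond_pos_sum; auto).
  rewrite Rabs_pos_eq in HN; lra.
Qed.

Lemma lebesgue_le_interval (A : R -> Prop) u v :
  u <= v -> (forall x, A x -> u < x < v) -> lebesgue A <= v - u.
Proof.
  intros Huv HA. unfold lebesgue. apply Rinf_le with 0.
  - exists (fun i => if Nat.eqb i 0 then u else 0), (fun i => if Nat.eqb i 0 then v else 0).
    split; [|split].
    + intros [|i]; simpl; lra.
    + intros x Hx. exists O. simpl. auto.
    + intros eps Heps. exists O. intros n _.
      replace (sum_f_R0 _ n) with (v - u); [unfold Rdist; rewrite Rminus_diag, Rabs_R0; auto|].
      induction n as [|n IH]; simpl; [lra|]. rewrite <- IH; lra.
  - intros s [a [b [Hab [_ Hs]]]].
    eapply infinite_sum_nonneg; [|exact Hs]. intros i; specialize (Hab i); cbv beta; lra.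
Qed.

(** Bounding the expected measure by the variational distance *)

Lemma lsum_le_pair_lsum {A B} (f : A -> R) (h : A * B -> R) l :
  NoDup l -> (forall x, exists L, NoDup L /\ f x <= lsum (fun y => h (x, y)) L) ->
  exists M, NoDup M /\ (forall pr, In pr M -> In (fst pr) l) /\ lsum f l <= lsum h M.
Proof.
  intros Hl Hfib. induction l as [|x l IH].
  - exists []; repeat split; [constructor|intros pr []|rewrite !lsum_nil; lra].
  - apply NoDup_cons_iff in Hl as [Hx Hl].
    destruct (IH Hl) as [M [HM [HMl HMsum]]]. destruct (Hfib x) as [L [HL HLsum]].
    exists (map (fun y => (x, y)) L ++ M). repeat split.
    + apply NoDup_app; auto.
      * apply Injective_map_NoDup; auto. intros y y' [= ->]; auto.
      * intros pr H1 H2. apply in_map_iff in H1 as [y [<- _]]. apply HMl in H2. contradiction.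
    + intros pr Hpr. apply in_app_iff in Hpr as [Hpr|Hpr].
      * apply in_map_iff in Hpr as [y [<- _]]. left; auto.
      * right; auto.
    + rewrite lsum_cons, lsum_app, lsum_map. lra.
Qed.

Section ExpectedMeasure.
Context {X Y Z : Type} (PX : X -> R) (PZX : X -> Z -> R) (W : X -> Y -> R)
  (phi : X -> Z -> Y)
  (HPX : is_pmf PX) (HPZX : forall x, is_pmf (PZX x)) (HW : forall x, is_pmf (W x)).

Definition pointwise_gap (pr : X * Y) : R :=
  Rabs (joint PX W pr - joint_phi PX PZX phi pr).

Lemma pointwise_gap_eq x y :
  pointwise_gap (x, y) = PX x * Rabs (W x y - image_law (PZX x) (phi x) y).
Proof.
  unfold pointwise_gap, joint, joint_phi; simpl.
  rewrite <- Rmult_minus_distr_l, Rabs_mult, (Rabs_pos_eq (PX x)) by apply (pmf_nonneg PX x HPX).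
  reflexivity.
Qed.

Lemma vdist_has_tsum : has_tsum pointwise_gap (vdist (joint PX W) (joint_phi PX PZX phi)).
Proof.
  apply (tsum_spec _ 2). intros l Hl.
  destruct (nodup_filter (map fst l) (fun _ => True)) as [xs [Hxs Hixs]].
  destruct (nodup_filter (map snd l) (fun _ => True)) as [ys [Hys Hiys]].
  set (G := fun pr : X * Y => PX (fst pr) *
              (W (fst pr) (snd pr) + image_law (PZX (fst pr)) (phi (fst pr)) (snd pr))).
  assert (Hterms : forall x y, 0 <= W x y /\ 0 <= image_law (PZX x) (phi x) y).
  { intros x y. split; [apply (pmf_nonneg (W x) y (HW x))|apply image_law_nonneg, HPZX]. }
  apply Rle_trans with (lsum G l).
  { apply lsum_le. intros [x y] _. rewrite pointwise_gap_eq. unfold G; simpl.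
    apply Rmult_le_compat_l; [apply (pmf_nonneg PX x HPX)|].
    destruct (Hterms x y). eapply Rle_trans; [apply Rabs_triang|].
    rewrite Rabs_Ropp, !Rabs_pos_eq; lra. }
  apply Rle_trans with (lsum G (list_prod xs ys)).
  { apply lsum_le_superset; auto.
    - intros [x y] Hin _. apply in_prod_iff. split.
      + apply Hixs; split; auto. change x with (fst (x, y)); apply in_map; auto.
      + apply Hiys; split; auto. change y with (snd (x, y)); apply in_map; auto.
    - intros [x y]; unfold G; simpl. destruct (Hterms x y).
      apply Rmult_le_pos; [apply (pmf_nonneg PX x HPX)|lra]. }
  rewrite lsum_prod. unfold G; simpl.
  apply Rle_trans with (lsum (fun x => 2 * PX x) xs).
  { apply lsum_le. intros x _. rewrite lsum_scal, lsum_plus, Rmult_comm.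
    apply Rmult_le_compat_r; [apply (pmf_nonneg PX x HPX)|].
    pose proof (pmf_lsum_le1 (W x) ys (HW x) Hys).
    pose proof (image_law_mass_le1 (PZX x) (phi x) (HPZX x) ys Hys). lra. }
  rewrite lsum_scal. pose proof (pmf_lsum_le1 PX xs HPX Hxs). lra.
Qed.

Variables eps gamma : R.
Hypothesis Heps : 0 < eps < 1.
Hypothesis Hgamma : 0 < gamma.

Definition bad_levels (x : X) (delta : R) : Prop :=
  0 <= delta < 1 - eps /\ cfun (PZX x) (delta + eps) - cfun (W x) delta < - gamma.

Definition mismatch_const : R := (1 - exp (- gamma)) * eps.

Lemma mismatch_const_pos : 0 < mismatch_const.
Proof.
  unfold mismatch_const. apply Rmult_lt_0_compat; [|lra].
  assert (exp (- gamma) < 1) by (rewrite <- exp_0; apply exp_increasing; lra). lra.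
Qed.

(* Markov step for one input: D(x) has measure at most 2, and is empty unless
   the conditional mismatch is at least mismatch_const. *)
Lemma bad_levels_measure_bound x : exists L, NoDup L /\
  PX x * lebesgue (bad_levels x) <= 2 / mismatch_const * lsum (fun y => pointwise_gap (x, y)) L.
Proof.
  pose proof mismatch_const_pos as Hc.
  assert (HPx : 0 <= PX x) by apply (pmf_nonneg PX x HPX).
  destruct (classic (exists d, bad_levels x d)) as [[d [Hd Hgap]]|Hempty].
  - destruct (cost_gap_forces_mismatch (PZX x) (W x) (phi x) eps gamma d)
      as [L [HL HLsum]]; auto; try lra.
    exists L; split; auto.
    rewrite (lsum_ext _ (fun y => PX x * Rabs (W x y - image_law (PZX x) (phi x) y)))
      by (intros; apply pointwise_gap_eq).
    rewrite lsum_scal. fold mismatch_const in HLsum.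
    assert (Hleb : lebesgue (bad_levels x) <= 1 - -1)
      by (apply lebesgue_le_interval; [lra|intros y [Hy _]; lra]).
    apply Rle_trans with (2 / mismatch_const * (PX x * mismatch_const)).
    + replace (2 / mismatch_const * (PX x * mismatch_const)) with (PX x * 2) by (field; lra).
      apply Rmult_le_compat_l; lra.
    + apply Rmult_le_compat_l; [apply Rlt_le, Rdiv_lt_0_compat; lra|].
      apply Rmult_le_compat_l; auto.
  - exists []; split; [constructor|]. rewrite lsum_nil, Rmult_0_r.
    assert (Hleb : lebesgue (bad_levels x) <= 0 - 0)
      by (apply lebesgue_le_interval; [lra|intros y Hy; exfalso; eauto]).
    assert (PX x * lebesgue (bad_levels x) <= PX x * 0) by (apply Rmult_le_compat_l; lra).
    lra.
Qed.

Lemma expected_bad_measure_bound :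
  0 <= tsum (fun x => PX x * lebesgue (bad_levels x)) <=
  2 / mismatch_const * vdist (joint PX W) (joint_phi PX PZX phi).
Proof.
  set (F := fun x => PX x * lebesgue (bad_levels x)).
  set (V := vdist (joint PX W) (joint_phi PX PZX phi)).
  pose proof mismatch_const_pos as Hc.
  assert (Hfinite : forall l, NoDup l -> lsum F l <= 2 / mismatch_const * V).
  { intros l Hl.
    destruct (lsum_le_pair_lsum F (fun pr => 2 / mismatch_const * pointwise_gap pr) l Hl)
      as [M [HM [_ HFM]]].
    { intros x. destruct (bad_levels_measure_bound x) as [L [HL HLsum]].
      exists L; split; auto. rewrite lsum_scal; auto. }
    rewrite lsum_scal in HFM. eapply Rle_trans; [apply HFM|].
    apply Rmult_le_compat_l; [apply Rlt_le, Rdiv_lt_0_compat; lra|].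
    apply has_tsum_le; auto. apply vdist_has_tsum. }
  pose proof (tsum_spec F _ Hfinite) as HF.
  split; [eapply has_tsum_nonneg; eauto|apply (has_tsum_least F); auto].
Qed.
End ExpectedMeasure.

Lemma Un_cv_dominated (u v : nat -> R) k :
  0 <= k -> (forall n, 0 <= u n <= k * v n) -> Un_cv v 0 -> Un_cv u 0.
Proof.
  intros Hk Huv Hv e He.
  destruct (Hv (e / (k + 1))) as [N HN]; [apply Rdiv_lt_0_compat; lra|].
  exists N. intros n Hn. specialize (HN n Hn). specialize (Huv n).
  unfold Rdist in *. rewrite Rminus_0_r in *. rewrite Rabs_pos_eq by lra.
  assert (Hkv : k * v n <= k * Rabs (v n)) by (apply Rmult_le_compat_l; auto; apply Rle_abs).
  assert (Hk1 : (k + 1) * Rabs (v n) < e).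
  { apply (Rmult_lt_compat_l (k + 1)) in HN; [|lra].
    replace ((k + 1) * (e / (k + 1))) with e in HN by (field; lra). lra. }
  pose proof (Rabs_pos (v n)). nra.
Qed.

Theorem theorem5 (X Y Z : nat -> Type)
  (HX : forall n, countable (X n)) (HY : forall n, countable (Y n))
  (HZ : forall n, countable (Z n))
  (PX : forall n, X n -> R) (PZX : forall n, X n -> Z n -> R)
  (W : forall n, X n -> Y n -> R)
  (HPX : forall n, is_pmf (PX n))
  (HPZX : forall n x, is_pmf (PZX n x))
  (HW : forall n x, is_pmf (W n x))
  (Happrox : approximating_source X Y Z PX PZX W) :
  forall eps gamma : R, 0 < eps < 1 -> 0 < gamma ->
  Un_cv (fun n => tsum (fun x : X n =>
     PX n x * lebesgue (fun delta => 0 <= delta < 1 - eps /\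
        cfun (PZX n x) (delta + eps) - cfun (W n x) delta < - gamma))) 0.
Proof.
  intros eps gamma Heps Hgamma. destruct Happrox as [phi Hvdist].
  eapply (Un_cv_dominated _ _ (2 / mismatch_const eps gamma)); [| |exact Hvdist].
  - apply Rlt_le, Rdiv_lt_0_compat; [lra|apply mismatch_const_pos; auto].
  - intros n. exact (expected_bad_measure_bound (PX n) (PZX n) (W n) (phi n)
             (HPX n) (HPZX n) (HW n) eps gamma Heps Hgamma).
Qed.
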